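(* For all $n\ge 0$, the quadruple of statistics $(\operatorname{asc},\operatorname{des},\operatorname{MNA},\operatorname{MND})$ has the same distribution on $S_n(231,312)$ as on $S_n(213,231)$, i.e. $$\sum_{\pi\in S_n(231,312)} t_1^{\operatorname{asc}(\pi)}t_2^{\operatorname{des}(\pi)}t_3^{\operatorname{MNA}(\pi)}t_4^{\operatorname{MND}(\pi)}=\sum_{\sigma\in S_n(213,231)} t_1^{\operatorname{asc}(\sigma)}t_2^{\operatorname{des}(\sigma)}t_3^{\operatorname{MNA}(\sigma)}t_4^{\operatorname{MND}(\sigma)}.$$
   Context: For $n\ge 0$, $S_n$ denotes the set of permutations $\pi=\pi_1\cdots\pi_n$ of $[n]=\{1,\dots,n\}$. $\pi$ avoids a pattern $\tau\in S_k$ if no subsequence $\pi_{i_1}\cdots\pi_{i_k}$ ($i_1<\dots<i_k$) satisfies $\pi_{i_a}<\pi_{i_b}\iff\tau_a<\tau_b$; $S_n(\tau,\rho)$ is the set of permutations in $S_n$ avoiding both $\tau$ and $\rho$. $\operatorname{asc}(\pi)$ (resp. $\operatorname{des}(\pi)$) is the number of $i\in[n-1]$ with $\pi_i<\pi_{i+1}$ (resp. $\pi_i>\pi_{i+1}$). $\operatorname{MNA}(\pi)$ is the maximum size of a set $I\subseteq[n-1]$ such that $\pi_i<\pi_{i+1}$ for all $i\in I$ and $|i-j|\ge 2$ for distinct $i,j\in I$; $\operatorname{MND}(\pi)$ is defined analogously with $\pi_i>\pi_{i+1}$. *)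

From mathcomp Require Import all_boot all_order all_algebra.
From mathcomp Require Import fingroup perm.
Set Implicit Arguments. Unset Strict Implicit. Unset Printing Implicit Defensive.
Import GRing.Theory.

(* Permutations of [n] are represented as {perm 'I_n}, with positions and
   values shifted by one (0-based). pi i is the value at position i. *)

(* one-line notation as a function on nat positions: pv pi j = pi_(j+1) - 1
   for j < n (and 0 otherwise, never used) *)
Definition pv (n : nat) (pi : {perm 'I_n}) (j : nat) : nat :=
  if insub j is Some i then (pi i : nat) else 0.

(* pi (in S_n) contains the pattern tau, given in one-line notation as a
   sequence of k distinct values (e.g. [:: 2; 3; 1] for 231): there are
   positions i_1 < ... < i_k (a strictly increasing map f : 'I_k -> 'I_n)
   such that pi_{i_a} < pi_{i_b} <-> tau_a < tau_b. *)
Definition contains (n : nat) (pi : {perm 'I_n}) (tau : seq nat) : bool :=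
  [exists f : {ffun 'I_(size tau) -> 'I_n},
    [forall a : 'I_(size tau), forall b : 'I_(size tau),
       ((a < b) ==> (f a < f b)) &&
       ((pi (f a) < pi (f b)) == (nth 0 tau a < nth 0 tau b))]].

Definition avoids (n : nat) (pi : {perm 'I_n}) (tau : seq nat) : bool :=
  ~~ contains pi tau.

Definition is_asc (n : nat) (pi : {perm 'I_n}) (i : 'I_n) : bool :=
  (i.+1 < n) && (pv pi i < pv pi i.+1).
Definition is_des (n : nat) (pi : {perm 'I_n}) (i : 'I_n) : bool :=
  (i.+1 < n) && (pv pi i.+1 < pv pi i).

Definition asc (n : nat) (pi : {perm 'I_n}) : nat := #|[pred i | is_asc pi i]|.
Definition des (n : nat) (pi : {perm 'I_n}) : nat := #|[pred i | is_des pi i]|.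

Definition nonadjacent (n : nat) (I : {set 'I_n}) : bool :=
  [forall i in I, forall j in I, (i != j) ==> ((i.+1 < j) || (j.+1 < i))].

Definition MNA (n : nat) (pi : {perm 'I_n}) : nat :=
  \max_(I : {set 'I_n} | [forall i in I, is_asc pi i] && nonadjacent I) #|I|.
Definition MND (n : nat) (pi : {perm 'I_n}) : nat :=
  \max_(I : {set 'I_n} | [forall i in I, is_des pi i] && nonadjacent I) #|I|.

Definition wt (R : comNzRingType) (t1 t2 t3 t4 : R) (n : nat) (pi : {perm 'I_n}) : R :=
  (t1 ^+ asc pi * t2 ^+ des pi * t3 ^+ MNA pi * t4 ^+ MND pi)%R.

From mathcomp Require Import all_boot all_order all_algebra.
From mathcomp Require Import fingroup perm.
From mathcomp Require Import zify.
Set Implicit Arguments. Unset Strict Implicit. Unset Printing Implicit Defensive.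

(* Both classes are in bijection with the possible descent sets (the subsets of
   the positions 1..n-1) through pi |-> Des pi, and asc, des, MNA and MND are
   all functions of the descent set.  If pi avoids 213 and 231, every entry is
   the minimum or the maximum of itself and the entries after it, so for j < i
   we have pi_j < pi_i exactly when j is an ascent.  If pi avoids 231 and 312,
   pi is layered, and pi_j < pi_i exactly when there is an ascent between j and
   i.  In both cases the descent set determines the relative order of any two
   entries, hence pi; conversely, for every set D the relative order so
   prescribed is a strict total order, and ranking along it yields a
   permutation in the class with descent set D. *)

Lemma card_ord_lt n m : m <= n -> #|[set v : 'I_n | v < m]| = m.
Proof.
move=> le_mn; rewrite -sum1_card; under eq_bigl do rewrite inE.
by rewrite (big_ord_narrow le_mn) sum1_card card_ord.
Qed.

Lemma perm_val_rank n (p : {perm 'I_n}) a : (p a : nat) = #|[pred c | p c < p a]|.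
Proof.
rewrite -{1}(card_ord_lt (ltnW (ltn_ord (p a)))) -(card_preimset _ (@perm_inj _ p)).
by apply: eq_card => c; rewrite !inE.
Qed.

Section PermOfRel.

Variables (n : nat) (lt : rel 'I_n).
Hypotheses (lt_irr : irreflexive lt) (lt_trans : transitive lt)
  (lt_total : forall a b, a != b -> lt a b || lt b a).

Definition rel_rank (a : 'I_n) : nat := #|[pred c | lt c a]|.

Lemma rel_rank_lt_n a : rel_rank a < n.
Proof.
rewrite -[n]card_ord -(cardC [pred c | lt c a]) -addn1 leq_add2l.
by apply/card_gt0P; exists a; rewrite !inE /= lt_irr.
Qed.

Lemma rel_rank_mono a b : lt a b -> rel_rank a < rel_rank b.
Proof.
move=> ab; apply/proper_card/properP; split.
  by apply/subsetP => c; rewrite !inE /= => /lt_trans; apply.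
by exists a; rewrite !inE /= ?ab ?lt_irr.
Qed.

Lemma rel_rank_ltE a b : (rel_rank a < rel_rank b) = lt a b.
Proof.
apply/idP/idP => [ab|]; last exact: rel_rank_mono.
have [eab|/lt_total/orP[] //] := eqVneq a b; first by rewrite eab ltnn in ab.
by move/rel_rank_mono; rewrite ltnNge (ltnW ab).
Qed.

Definition rel_rank_ord (a : 'I_n) : 'I_n := Ordinal (rel_rank_lt_n a).

Lemma rel_rank_ord_inj : injective rel_rank_ord.
Proof.
move=> a b /(congr1 val) /= eab; apply/eqP; apply: contraT => /lt_total.
by rewrite -!rel_rank_ltE eab ltnn.
Qed.

Definition perm_of_rel : {perm 'I_n} := perm rel_rank_ord_inj.

Lemma perm_of_relE a b : (perm_of_rel a < perm_of_rel b) = lt a b.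
Proof. by rewrite !permE rel_rank_ltE. Qed.

Lemma perm_of_rel_uniq (p : {perm 'I_n}) :
  (forall a b, (p a < p b) = lt a b) -> p = perm_of_rel.
Proof.
move=> p_lt; apply/permP => a; apply/val_inj; rewrite permE /= perm_val_rank.
by apply: eq_card => c; rewrite !inE /= p_lt.
Qed.

End PermOfRel.

Lemma perm_ltNgt n (p : {perm 'I_n}) (a b : 'I_n) :
  a != b :> nat -> (p a < p b) = ~~ (p b < p a).
Proof. by move=> neq_ab; rewrite ltn_neqAle leqNgt val_eqE (inj_eq perm_inj) neq_ab. Qed.

Definition des_set n (p : {perm 'I_n}) : {set 'I_n} := [set i | is_des p i].

Definition nonlast n : {set 'I_n} := [set i : 'I_n | i.+1 < n].

Section DescentSet.

Variables (n : nat) (p : {perm 'I_n}).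

Lemma pvE (i : 'I_n) : pv p i = p i.
Proof. by rewrite /pv valK. Qed.

Lemma des_set_sub : des_set p \subset nonlast n.
Proof. by apply/subsetP => i; rewrite !inE => /andP[]. Qed.

Lemma mem_des_set (i i1 : 'I_n) : i1 = i.+1 :> nat -> (i \in des_set p) = (p i1 < p i).
Proof. by move=> i1E; rewrite inE /is_des -i1E !pvE ltn_ord. Qed.

Lemma perm_lt_succ (i i1 : 'I_n) :
  i1 = i.+1 :> nat -> (p i < p i1) = (i \notin des_set p).
Proof. by move=> i1E; rewrite (mem_des_set i1E) perm_ltNgt // i1E ltn_eqF. Qed.

Lemma is_ascE (i : 'I_n) : is_asc p i = (i \in nonlast n) && (i \notin des_set p).
Proof.
rewrite inE; case: ltnP => [i1_lt_n|] /=; last by rewrite /is_asc ltnNge => ->.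
by rewrite /is_asc i1_lt_n -[i.+1]/(val (Ordinal i1_lt_n)) !pvE perm_lt_succ.
Qed.

End DescentSet.

Lemma des_setP n (p : {perm 'I_n}) (D : {set 'I_n}) : D \subset nonlast n ->
  (forall i i1 : 'I_n, i1 = i.+1 :> nat -> (i \in D) = (p i1 < p i)) ->
  des_set p = D.
Proof.
move=> /subsetP D_nonlast D_des; apply/setP => i.
have [i1_lt_n|i1_ge_n] := ltnP i.+1 n.
  by rewrite (D_des _ (Ordinal i1_lt_n)) // (@mem_des_set _ _ _ (Ordinal i1_lt_n)).
have i_last : i \notin nonlast n by rewrite inE -leqNgt.
by rewrite (contraNF (D_nonlast i)) // (contraNF (subsetP (des_set_sub p) i)).
Qed.

Lemma wt_des_set (R : comNzRingType) (t1 t2 t3 t4 : R) n (p q : {perm 'I_n}) :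
  des_set p = des_set q -> wt t1 t2 t3 t4 p = wt t1 t2 t3 t4 q.
Proof.
move=> pq_des.
have asc_pq : is_asc p =1 is_asc q by move=> i; rewrite !is_ascE pq_des.
have des_pq : is_des p =1 is_des q by move=> i; rewrite -!in_set -/(des_set _) pq_des.
rewrite /wt /asc /des (eq_card asc_pq) (eq_card des_pq).
by congr (_ * (_ ^+ _) * (_ ^+ _))%R; apply: eq_bigl => I; congr (_ && _);
  apply: eq_forallb => i; rewrite ?asc_pq ?des_pq.
Qed.

Section Patterns.

Variables (n : nat) (p : {perm 'I_n}).

Lemma contains3P (x y z : nat) : uniq [:: x; y; z] ->
  reflect (exists i j k : 'I_n, [/\ i < j, j < k, (p i < p j) = (x < y),
                                   (p i < p k) = (x < z) & (p j < p k) = (y < z)])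
          (contains p [:: x; y; z]).
Proof.
rewrite /= !inE !negb_or andbT => /andP[/andP[nxy nxz] nyz].
apply: (iffP existsP) => [[f /forallP f_pat]|[i [j [k [ij jk e_ij e_ik e_jk]]]]].
  have f_lt (a b : 'I_3) : a < b -> (f a < f b) &&
      ((p (f a) < p (f b)) == (nth 0 [:: x; y; z] a < nth 0 [:: x; y; z] b)).
    by move=> ab; move/forallP/(_ b): (f_pat a); rewrite ab.
  have /andP[ij /eqP e_ij] := f_lt (@Ordinal 3 0 isT) (@Ordinal 3 1 isT) isT.
  have /andP[ik /eqP e_ik] := f_lt (@Ordinal 3 0 isT) (@Ordinal 3 2 isT) isT.
  have /andP[jk /eqP e_jk] := f_lt (@Ordinal 3 1 isT) (@Ordinal 3 2 isT) isT.
  by exists (f (@Ordinal 3 0 isT)), (f (@Ordinal 3 1 isT)), (f (@Ordinal 3 2 isT)).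
have ik := ltn_trans ij jk.
have swap (a b : 'I_n) u v : a < b -> u != v -> (p a < p b) = (u < v) ->
    (p b < p a) = (v < u).
  move=> ab nuv e_ab; rewrite perm_ltNgt ?e_ab; first by move: nuv; lia.
  by rewrite (gtn_eqF ab).
exists [ffun a : 'I_3 => nth i [:: i; j; k] a].
apply/forallP => a; apply/forallP => b; rewrite !ffunE.
case: a => [[|[|[|a]]] ha] //; case: b => [[|[|[|b]]] hb] //=;
  by rewrite ?ltnn ?ij ?jk ?ik ?e_ij ?e_ik ?e_jk ?(swap i j x y) ?(swap i k x z)
     ?(swap j k y z) ?eqxx.
Qed.

Lemma contains_213 (i j k : 'I_n) :
  i < j -> j < k -> p j < p i -> p i < p k -> contains p [:: 2; 1; 3].
Proof.
move=> ij jk pji pik; apply/contains3P => //; exists i, j, k; split => //; lia.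
Qed.

Lemma contains_231 (i j k : 'I_n) :
  i < j -> j < k -> p i < p j -> p k < p i -> contains p [:: 2; 3; 1].
Proof.
move=> ij jk pij pki; apply/contains3P => //; exists i, j, k; split => //; lia.
Qed.

Lemma contains_312 (i j k : 'I_n) :
  i < j -> j < k -> p j < p k -> p k < p i -> contains p [:: 3; 1; 2].
Proof.
move=> ij jk pjk pki; apply/contains3P => //; exists i, j, k; split => //; lia.
Qed.

End Patterns.

Section Extremal.

Variables (n : nat) (D : {set 'I_n}).

Definition extremal_lt : rel 'I_n :=
  fun a b => (a < b) && (a \notin D) || (b < a) && (b \in D).

Lemma extremal_lt_irr : irreflexive extremal_lt.
Proof. by move=> a; rewrite /extremal_lt ltnn. Qed.

Lemma extremal_lt_trans : transitive extremal_lt.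
Proof.
move=> b a c /orP[/andP[ab aD]|/andP[ba bD]] /orP[/andP[bc bD']|/andP[cb cD]].
- by rewrite /extremal_lt (ltn_trans ab bc) aD.
- rewrite /extremal_lt aD cD andbT; case: ltngtP => // /val_inj ac.
  by rewrite ac cD in aD.
- by rewrite bD in bD'.
- by rewrite /extremal_lt (ltn_trans cb ba) cD orbT.
Qed.

Lemma extremal_lt_total a b : a != b -> extremal_lt a b || extremal_lt b a.
Proof.
move=> neq_ab; rewrite /extremal_lt; case: ltngtP => [_|_|/val_inj eq_ab] /=.
- by case: (a \in D).
- by case: (b \in D).
- by rewrite eq_ab eqxx in neq_ab.
Qed.

Definition extremal_perm : {perm 'I_n} :=
  perm_of_rel extremal_lt_irr extremal_lt_trans extremal_lt_total.

Lemma extremal_perm_avoids :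
  avoids extremal_perm [:: 2; 1; 3] && avoids extremal_perm [:: 2; 3; 1].
Proof.
apply/andP; split; apply/negP => /contains3P [//|i [j [k [ij jk]]]];
  rewrite !perm_of_relE /extremal_lt (ltn_trans ij jk) ij /=;
  by rewrite [j < i]ltnNge (ltnW ij) [k < i]ltnNge (ltnW (ltn_trans ij jk)) /= => ->.
Qed.

Lemma des_extremal_perm : D \subset nonlast n -> des_set extremal_perm = D.
Proof.
move=> D_nonlast; apply: des_setP => // i i1 i1E.
by rewrite perm_of_relE /extremal_lt i1E ltnSn ltnNge leqnSn.
Qed.

End Extremal.

Section Avoid213_231.

Variables (n : nat) (p : {perm 'I_n}).
Hypotheses (p_213 : avoids p [:: 2; 1; 3]) (p_231 : avoids p [:: 2; 3; 1]).

Lemma avoid213_231_ltE (j i : 'I_n) : j < i -> (p j < p i) = (j \notin des_set p).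
Proof.
move=> ji; have [j1 j1E] : {j1 : 'I_n | j1 = j.+1 :> nat}.
  by exists (Ordinal (leq_ltn_trans ji (ltn_ord i))).
have jj1 : j < j1 by rewrite j1E.
rewrite -(perm_lt_succ _ j1E).
have [<- //|i_neq_j1] := eqVneq j1 i.
have j1i : j1 < i by rewrite ltn_neqAle val_eqE i_neq_j1 j1E.
apply/idP/idP => [pji|pjj1].
  rewrite perm_ltNgt ?(ltn_eqF jj1) //; apply: contraNN p_213 => pj1j.
  exact: contains_213 jj1 j1i pj1j pji.
rewrite perm_ltNgt ?(ltn_eqF ji) //; apply: contraNN p_231 => pij.
exact: contains_231 jj1 j1i pjj1 pij.
Qed.

Lemma avoid213_231_ltE_extremal (a b : 'I_n) :
  (p a < p b) = extremal_lt (des_set p) a b.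
Proof.
rewrite /extremal_lt; case: (ltngtP a b) => [ab|ba|/val_inj ->] /=.
- by rewrite orbF avoid213_231_ltE.
- by rewrite perm_ltNgt ?(gtn_eqF ba) // avoid213_231_ltE ?negbK.
- by rewrite ltnn.
Qed.

Lemma extremal_perm_des_set : extremal_perm (des_set p) = p.
Proof. exact/esym/perm_of_rel_uniq/avoid213_231_ltE_extremal. Qed.

End Avoid213_231.

Section Layered.

Variables (n : nat) (D : {set 'I_n}).

Definition asc_before (a : 'I_n) : nat := #|[pred c : 'I_n | (c < a) && (c \notin D)]|.

Lemma asc_beforeS (a a1 : 'I_n) :
  a1 = a.+1 :> nat -> asc_before a1 = asc_before a + (a \notin D).
Proof.
move=> a1E; rewrite /asc_before (cardD1 a) !inE a1E ltnSn /= addnC; congr (_ + _).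
apply: eq_card => c; rewrite !inE ltnS leq_eqVlt -val_eqE.
by case: eqVneq => [->|]; rewrite /= ?ltnn ?andbF.
Qed.

Lemma leq_asc_before (a b : 'I_n) : a <= b -> asc_before a <= asc_before b.
Proof.
move=> ab; apply/subset_leq_card/subsetP => c; rewrite !inE => /andP[ca ->].
by rewrite (leq_trans ca ab).
Qed.

(* The layers are the maximal descending runs, ordered from left to right. *)
Definition layered_lt : rel 'I_n := fun a b =>
  (asc_before a < asc_before b) || (asc_before a == asc_before b) && (b < a).

Lemma layered_lt_irr : irreflexive layered_lt.
Proof. by move=> a; rewrite /layered_lt !ltnn andbF. Qed.

Lemma layered_lt_trans : transitive layered_lt.
Proof.
rewrite /layered_lt => b a c /orP[ab|/andP[/eqP ab ba]] /orP[bc|/andP[/eqP bc cb]].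
- by rewrite (ltn_trans ab bc).
- by rewrite -bc ab.
- by rewrite ab bc.
- by rewrite ab bc eqxx (ltn_trans cb ba) orbT.
Qed.

Lemma layered_lt_total a b : a != b -> layered_lt a b || layered_lt b a.
Proof.
move=> neq_ab; rewrite /layered_lt eq_sym.
case: ltngtP => //= _; case: (ltngtP a b) => //= /val_inj eq_ab.
by rewrite eq_ab eqxx in neq_ab.
Qed.

Definition layered_perm : {perm 'I_n} :=
  perm_of_rel layered_lt_irr layered_lt_trans layered_lt_total.

Lemma layered_perm_avoids :
  avoids layered_perm [:: 2; 3; 1] && avoids layered_perm [:: 3; 1; 2].
Proof.
apply/andP; split; apply/negP => /contains3P [//|i [j [k [ij jk]]]];
  rewrite !perm_of_relE /layered_lt [j < i]ltnNge (ltnW ij) [k < j]ltnNge (ltnW jk);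
  rewrite [k < i]ltnNge (ltnW (ltn_trans ij jk)) /= !andbF !orbF;
  have := leq_asc_before (ltnW ij); have := leq_asc_before (ltnW jk); lia.
Qed.

Lemma des_layered_perm : D \subset nonlast n -> des_set layered_perm = D.
Proof.
move=> D_nonlast; apply: des_setP => // i i1 i1E.
rewrite perm_of_relE /layered_lt (asc_beforeS i1E) i1E ltnSn andbT.
by case: (i \in D); rewrite ?addn0 ?addn1 ?ltnn ?eqxx // ltnNge leqnSn /= eqn_leq ltnn.
Qed.

End Layered.

Section Avoid231_312.

Variables (n : nat) (p : {perm 'I_n}).
Hypotheses (p_231 : avoids p [:: 2; 3; 1]) (p_312 : avoids p [:: 3; 1; 2]).

Lemma avoid231_312_split (j m i : 'I_n) :
  j < m -> m < i -> (p j < p i) = (p j < p m) || (p m < p i).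
Proof.
move=> jm mi; have ji := ltn_trans jm mi.
apply/idP/orP => [pji|[pjm|pmi]].
- by case: (ltnP (p j) (p m)) => [|pmj]; [left | right; apply: leq_ltn_trans pmj pji].
- rewrite perm_ltNgt ?(ltn_eqF ji) //; apply: contraNN p_231 => pij.
  exact: contains_231 jm mi pjm pij.
- rewrite perm_ltNgt ?(ltn_eqF ji) //; apply: contraNN p_312 => pij.
  exact: contains_312 jm mi pmi pij.
Qed.

Lemma avoid231_312_ltE (j i : 'I_n) :
  j < i -> (p j < p i) = (asc_before (des_set p) j < asc_before (des_set p) i).
Proof.
case: i => i lt_in /=; elim: i lt_in => // i IH lt_i1n.
rewrite ltnS leq_eqVlt => /orP[/eqP ji|ji].
  have i1E : Ordinal lt_i1n = j.+1 :> nat by rewrite /= ji.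
  by rewrite (asc_beforeS _ i1E) -{1}[asc_before _ j]addn0 ltn_add2l lt0b perm_lt_succ.
pose m := Ordinal (ltnW lt_i1n); have m1E : Ordinal lt_i1n = m.+1 :> nat by [].
have le_jm := leq_asc_before (des_set p) (ltnW ji : j <= m).
rewrite (@avoid231_312_split _ m) // IH // (perm_lt_succ _ m1E) (asc_beforeS _ m1E).
by case: (m \notin _); rewrite ?addn0 ?orbF // addn1 ltnS le_jm orbT.
Qed.

Lemma avoid231_312_ltE_layered (a b : 'I_n) :
  (p a < p b) = layered_lt (des_set p) a b.
Proof.
rewrite /layered_lt; case: (ltngtP a b) => [ab|ba|/val_inj ->].
- by rewrite andbF orbF avoid231_312_ltE.
- by rewrite perm_ltNgt ?(gtn_eqF ba) // avoid231_312_ltE // -leqNgt leq_eqVlt orbC andbT.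
- by rewrite !ltnn andbF.
Qed.

Lemma layered_perm_des_set : layered_perm (des_set p) = p.
Proof. exact/esym/perm_of_rel_uniq/avoid231_312_ltE_layered. Qed.

End Avoid231_312.

Local Open Scope ring_scope.

Lemma sum_over_des_sets (R : nmodType) n (C : pred {perm 'I_n})
    (mk : {set 'I_n} -> {perm 'I_n}) (F : {perm 'I_n} -> R) :
  (forall p, C p -> mk (des_set p) = p) -> (forall D, C (mk D)) ->
  (forall D : {set 'I_n}, D \subset nonlast n -> des_set (mk D) = D) ->
  \sum_(p | C p) F p = \sum_(D : {set 'I_n} | D \subset nonlast n) F (mk D).
Proof.
move=> mkK C_mk des_mk; rewrite (reindex_onto mk (@des_set n) mkK).
apply: eq_bigl => D; rewrite C_mk /=.
by apply/eqP/idP => [<-|/des_mk //]; apply: des_set_sub.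
Qed.

Theorem theorem16 (n : nat) (R : comNzRingType) (t1 t2 t3 t4 : R) :
  \sum_(pi : {perm 'I_n} | avoids pi [:: 2; 3; 1]%N && avoids pi [:: 3; 1; 2]%N)
     wt t1 t2 t3 t4 pi
  = \sum_(sigma : {perm 'I_n} | avoids sigma [:: 2; 1; 3]%N && avoids sigma [:: 2; 3; 1]%N)
     wt t1 t2 t3 t4 sigma.
Proof.
have layered_inv (p : {perm 'I_n}) : avoids p [:: 2; 3; 1]%N && avoids p [:: 3; 1; 2]%N ->
    layered_perm (des_set p) = p.
  by case/andP; apply: layered_perm_des_set.
have extremal_inv (p : {perm 'I_n}) : avoids p [:: 2; 1; 3]%N && avoids p [:: 2; 3; 1]%N ->
    extremal_perm (des_set p) = p.
  by case/andP; apply: extremal_perm_des_set.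
rewrite (sum_over_des_sets _ layered_inv (@layered_perm_avoids n) (@des_layered_perm n)).
rewrite (sum_over_des_sets _ extremal_inv (@extremal_perm_avoids n) (@des_extremal_perm n)).
apply: eq_bigr => D D_nonlast; apply: wt_des_set.
by rewrite des_layered_perm ?des_extremal_perm.
Qed.
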